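(* Let $\Sigma$ be an $N$-fan. The following are equivalent: (i) $\Sigma$ is relatively skeletal complete, i.e. the conic hull of $\bigcup\Sigma$ equals the real span $\langle\Sigma\rangle$ of $\bigcup\Sigma$; (ii) $\mathrm{im}(c)\cap\mathbb{N}^{\Sigma_1}=0$; (iii) the submonoid $D\subseteq A$ generated by $\{\alpha_\rho\mid\rho\in\Sigma_1\}$ satisfies $D\cap(-D)=0$, and $\alpha_\rho\neq0$ for every $\rho\in\Sigma_1$.
   Context: Let $V$ be a real vector space of finite dimension $n$, $N\subseteq V$ a lattice (free $\mathbb{Z}$-submodule of rank $n$ spanning $V$) and $M=\mathrm{Hom}(N,\mathbb{Z})\subseteq V^*$. An $N$-fan is a finite set $\Sigma$ of sharp (containing no line) polyhedral cones in $V$, each the conic hull of a finite subset of $N$, such that every face of a cone of $\Sigma$ lies in $\Sigma$ and the intersection of two cones of $\Sigma$ is a face of each. Let $\Sigma_1$ be the set of rays of $\Sigma$; for $\rho\in\Sigma_1$ let $\rho_N$ be the primitive generator of $N\cap\rho$. Let $c\colon M\to\mathbb{Z}^{\Sigma_1}$, $m\mapsto(m(\rho_N))_\rho$, let $a\colon\mathbb{Z}^{\Sigma_1}\to A$ be its cokernel and $\alpha_\rho=a(\delta_\rho)$ for the standard basis $(\delta_\rho)$. *)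

From HB Require Import structures.
From mathcomp Require Import all_boot all_order all_algebra.
Set Implicit Arguments. Unset Strict Implicit. Unset Printing Implicit Defensive.
Import Order.TTheory GRing.Theory Num.Theory.
Local Open Scope ring_scope.

(* Conventions: V = 'rV[R]_n (R a real field), the lattice N is the set of
   vectors latt B z = z *m B for z : 'rV[int]_n, where B is an invertible
   matrix (a lattice basis).  M = Hom(N,Z) is identified with 'rV[int]_n through the
   dual basis: m(z) = dot m z. *)

Definition dot (T : comNzRingType) (n : nat) (u v : 'rV[T]_n) : T := (u *m v^T) 0 0.

Definition latt (R : realFieldType) (n : nat) (B : 'M[R]_n) (z : 'rV[int]_n)
  : 'rV[R]_n := map_mx (fun a : int => a%:~R) z *m B.

Definition conic_hull (R : realFieldType) (n : nat) (S : 'rV[R]_n -> Prop)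
  (x : 'rV[R]_n) : Prop :=
  exists (s : seq 'rV[R]_n) (l : 'I_(size s) -> R),
    [/\ forall i : 'I_(size s), S s`_i, forall i, 0 <= l i &
        x = \sum_(i < size s) l i *: s`_i].

Definition lin_span (R : realFieldType) (n : nat) (S : 'rV[R]_n -> Prop)
  (x : 'rV[R]_n) : Prop :=
  exists (s : seq 'rV[R]_n) (l : 'I_(size s) -> R),
    (forall i : 'I_(size s), S s`_i) /\ x = \sum_(i < size s) l i *: s`_i.

Definition gcone (R : realFieldType) (n : nat) (B : 'M[R]_n)
  (G : seq 'rV[int]_n) : 'rV[R]_n -> Prop :=
  conic_hull (fun y => y \in map (latt B) G).

Definition set_eq (R : realFieldType) (n : nat) (C D : 'rV[R]_n -> Prop) : Prop :=
  forall x, C x <-> D x.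

Definition sharp (R : realFieldType) (n : nat) (C : 'rV[R]_n -> Prop) : Prop :=
  forall x, C x -> C (- x) -> x = 0.

Definition is_face (R : realFieldType) (n : nat) (F C : 'rV[R]_n -> Prop) : Prop :=
  exists m : 'rV[R]_n, (forall x, C x -> 0 <= dot m x) /\
    set_eq F (fun x => C x /\ dot m x = 0).

(* an N-fan, given as a finite list of cones, each given by a finite list of
   lattice generators *)
Definition is_fan (R : realFieldType) (n : nat) (B : 'M[R]_n)
  (Sigma : seq (seq 'rV[int]_n)) : Prop :=
  [/\ forall s, s \in Sigma -> sharp (gcone B s),
      forall s, s \in Sigma -> forall F, is_face F (gcone B s) ->
        exists2 t, t \in Sigma & set_eq F (gcone B t) &
      forall s t, s \in Sigma -> t \in Sigma ->
        is_face (fun x => gcone B s x /\ gcone B t x) (gcone B s) /\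
        is_face (fun x => gcone B s x /\ gcone B t x) (gcone B t)].

(* dimension of the cone generated by G = dimension of its linear span
   = rank of the matrix of its generators *)
Definition cone_dim (R : realFieldType) (n : nat) (B : 'M[R]_n)
  (G : seq 'rV[int]_n) : nat :=
  \rank (\matrix_(i < size G, j < n) latt B G`_i 0 j).

Definition primitive_gen (R : realFieldType) (n : nat) (B : 'M[R]_n)
  (C : 'rV[R]_n -> Prop) (u : 'rV[int]_n) : Prop :=
  [/\ C (latt B u), u != 0 &
      forall w : 'rV[int]_n, C (latt B w) -> exists t : nat, w = u *+ t].

Definition rel_skel_complete (R : realFieldType) (n : nat) (B : 'M[R]_n)
  (Sigma : seq (seq 'rV[int]_n)) : Prop :=
  let U := fun x => exists2 s, s \in Sigma & gcone B s x in
  set_eq (conic_hull U) (lin_span U).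

(* rays indexed by 'I_k with primitive generators r i; c : M -> Z^{Sigma_1} *)
Definition cmap (n k : nat) (r : 'I_k -> 'rV[int]_n) (m : 'rV[int]_n)
  : 'rV[int]_k := \row_i dot m (r i).

Definition in_im_c (n k : nat) (r : 'I_k -> 'rV[int]_n) (x : 'rV[int]_k) : Prop :=
  exists m : 'rV[int]_n, x = cmap r m.

Definition nonneg (k : nat) (x : 'rV[int]_k) : Prop := forall i, 0 <= x 0 i.

(* A = coker c = Z^{Sigma_1} / im c ; a x = a y  iff  x - y \in im c *)
Definition coker_eq (n k : nat) (r : 'I_k -> 'rV[int]_n) (x y : 'rV[int]_k) : Prop :=
  in_im_c r (x - y).

Definition delta (k : nat) (i : 'I_k) : 'rV[int]_k := \row_j (i == j)%:R.

Definition cond_ii (n k : nat) (r : 'I_k -> 'rV[int]_n) : Prop :=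
  forall x, in_im_c r x -> nonneg x -> x = 0.

(* (iii) D ∩ (-D) = 0 with D = a(N^{Sigma_1}), and alpha_rho = a(delta_rho) <> 0 *)
Definition cond_iii (n k : nat) (r : 'I_k -> 'rV[int]_n) : Prop :=
  (forall x y, nonneg x -> nonneg y -> coker_eq r x (- y) -> coker_eq r x 0) /\
  (forall i, ~ coker_eq r (delta i) 0).

From HB Require Import structures.
From mathcomp Require Import all_boot all_order all_algebra.
From mathcomp Require Import ring.
From Stdlib Require Import Classical.
Set Implicit Arguments. Unset Strict Implicit. Unset Printing Implicit Defensive.
Import Order.TTheory GRing.Theory Num.Theory.
Local Open Scope ring_scope.

(* Since a fan is closed under faces and its
   one-dimensional cones are the listed rays, every cone of the fan lies in the
   cone generated by the rays ([fan_cone_in_rays]).  Then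
   - (ii) <-> (iii) is elementary arithmetic in Z^k;
   - (i) -> (ii): a functional with c(m) >= 0 is nonnegative on the fan, and
     (i) makes -r_i a nonnegative combination, forcing c(m) = 0;
   - (ii) -> (i): Farkas over Q plus clearing denominators shows that -r_i lies
     in the cone of the rays, so this cone is a subspace containing the fan. *)

Section Dot.
Variables (T : comNzRingType) (n : nat).
Local Notation V := 'rV[T]_n.

Lemma dotE (u v : V) : dot u v = \sum_j u 0 j * v 0 j.
Proof. by rewrite /dot !mxE; apply: eq_bigr => j _; rewrite mxE. Qed.

Lemma dotC (u v : V) : dot u v = dot v u.
Proof. by rewrite !dotE; apply: eq_bigr => j _; rewrite mulrC. Qed.

Lemma dotDr (u v w : V) : dot u (v + w) = dot u v + dot u w.
Proof. by rewrite !dotE -big_split; apply: eq_bigr => j _; rewrite mxE mulrDr. Qed.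

Lemma dotZr (u v : V) c : dot u (c *: v) = c * dot u v.
Proof. by rewrite !dotE mulr_sumr; apply: eq_bigr => j _; rewrite mxE mulrCA. Qed.

Lemma dot0r (u : V) : dot u 0 = 0.
Proof. by rewrite dotE big1 // => j _; rewrite mxE mulr0. Qed.

Lemma dotNr (u v : V) : dot u (- v) = - dot u v.
Proof. by rewrite -scaleN1r dotZr mulN1r. Qed.

Lemma dotBr (u v w : V) : dot u (v - w) = dot u v - dot u w.
Proof. by rewrite dotDr dotNr. Qed.

Lemma dotDl (u v w : V) : dot (v + w) u = dot v u + dot w u.
Proof. by rewrite dotC dotDr !(dotC u). Qed.

Lemma dotZl (u v : V) c : dot (c *: v) u = c * dot v u.
Proof. by rewrite dotC dotZr dotC. Qed.

Lemma dotBl (u v w : V) : dot (v - w) u = dot v u - dot w u.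
Proof. by rewrite dotC dotBr !(dotC u). Qed.

End Dot.

Lemma dot_intr (T : comNzRingType) n (m z : 'rV[int]_n) :
  (dot m z)%:~R =
  dot (map_mx (fun a : int => a%:~R) m) (map_mx (fun a : int => a%:~R) z) :> T.
Proof.
rewrite !dotE (big_morph _ (intrD _) (mulr0z 1)).
by apply: eq_bigr => j _; rewrite !mxE intrM.
Qed.

Section Cones.
Variables (F : realFieldType) (n : nat).
Local Notation V := 'rV[F]_n.

Lemma dot_self_gt0 (b : V) : b != 0 -> 0 < dot b b.
Proof.
move=> nz; rewrite dotE lt_def sumr_ge0 ?andbT => [|j _]; last first.
  by rewrite -expr2 sqr_ge0.
apply/negP => /eqP /psumr_eq0P H.
move/eqP: nz; apply; apply/rowP => j; rewrite mxE.
have /eqP := H (fun i _ => sqr_ge0 (b 0 i)) j isT.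
by rewrite -expr2 sqrf_eq0 => /eqP.
Qed.

(* [in_cone A x]: x is a nonnegative combination of the vectors of the list A.
   The recursive form (peel off the first generator) suits inductions on A. *)
Fixpoint in_cone (A : seq V) (x : V) : Prop :=
  if A is a :: A' then exists2 c, 0 <= c & in_cone A' (x - c *: a) else x = 0.

Lemma in_cone0 A : in_cone A 0.
Proof. by elim: A => [|a A IH] //=; exists 0; rewrite ?scale0r ?subr0. Qed.

Lemma in_coneD A x y : in_cone A x -> in_cone A y -> in_cone A (x + y).
Proof.
elim: A x y => [|a A IH] x y /=; first by move=> -> ->; rewrite addr0.
move=> [c c0 Hx] [d d0 Hy]; exists (c + d); first exact: addr_ge0.
by have := IH _ _ Hx Hy; rewrite scalerDl opprD addrACA.
Qed.

Lemma in_coneZ A x c : 0 <= c -> in_cone A x -> in_cone A (c *: x).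
Proof.
move=> c0; elim: A x => [|a A IH] x /=; first by move=> ->; rewrite scaler0.
move=> [d d0 Hx]; exists (c * d); first exact: mulr_ge0.
by have := IH _ Hx; rewrite scalerBr scalerA.
Qed.

Lemma in_cone_sum A I (s : seq I) (G : I -> V) :
  (forall i, in_cone A (G i)) -> in_cone A (\sum_(i <- s) G i).
Proof. by move=> HG; elim/big_ind: _ => //; [apply: in_cone0|apply: in_coneD]. Qed.

Lemma in_cone_mem A u : u \in A -> in_cone A u.
Proof.
elim: A => [|a A IH] //=; rewrite in_cons => /orP [/eqP ->|/IH Hu].
  by exists 1; rewrite ?ler01 // scale1r subrr; apply: in_cone0.
by exists 0; rewrite // scale0r subr0.
Qed.

Lemma in_cone_sub A A' x :
  (forall u, u \in A -> in_cone A' u) -> in_cone A x -> in_cone A' x.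
Proof.
elim: A x => [|a A IH] x HA /=; first by move=> ->; apply: in_cone0.
move=> [c c0 Hx]; rewrite -(subrK (c *: a) x); apply: in_coneD.
  by apply: IH => // u Hu; apply: HA; rewrite in_cons Hu orbT.
by apply: in_coneZ => //; apply: HA; rewrite mem_head.
Qed.

Lemma in_cone_dot_ge0 (y : V) A x :
  (forall u, u \in A -> 0 <= dot y u) -> in_cone A x -> 0 <= dot y x.
Proof.
elim: A x => [|a A IH] x HA /=; first by move=> ->; rewrite dot0r.
move=> [c c0 Hx]; rewrite -(subrK (c *: a) x) dotDr dotZr addr_ge0 //.
  by apply: IH => // u Hu; apply: HA; rewrite in_cons Hu orbT.
by rewrite mulr_ge0 //; apply: HA; rewrite mem_head.
Qed.

Lemma in_cone_opp A x : in_cone A x -> in_cone (map -%R A) (- x).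
Proof.
elim: A x => [|a A IH] x /=; first by move=> ->; rewrite oppr0.
move=> [c c0 Hx]; exists c => //.
by have := IH _ Hx; rewrite scalerN opprB opprK addrC.
Qed.

Lemma in_cone_cat_cons A C h x :
  in_cone (A ++ h :: C) x <-> exists2 c, 0 <= c & in_cone (A ++ C) (x - c *: h).
Proof.
elim: A x => [|a A IH] x //=; split.
  move=> [c c0 /IH [d d0 H]]; exists d => //; exists c => //.
  by rewrite addrAC.
move=> [d d0 [c c0 H]]; exists c => //; apply/IH; exists d => //.
by rewrite addrAC.
Qed.

Lemma in_coneP A x :
  in_cone A x <-> exists l : 'I_(size A) -> F,
     (forall i, 0 <= l i) /\ x = \sum_(i < size A) l i *: A`_i.
Proof.
elim: A x => [|a A IH] x /=.
  split; first by move=> ->; exists (fun _ => 0); split=> //; rewrite big_ord0.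
  by move=> [l [_ ->]]; rewrite big_ord0.
split.
  move=> [c c0 /IH [l [l0 Hl]]].
  exists (fun i => if unlift ord0 i is Some j then l j else c); split.
    by move=> i; case: (unlift ord0 i).
  rewrite big_ord_recl unlift_none /=.
  under eq_bigr => j _ do rewrite liftK /=.
  by rewrite -Hl addrC subrK.
move=> [l [l0 ->]]; exists (l ord0) => //; apply/IH.
exists (fun j => l (lift ord0 j)); split; first by move=> j; apply: l0.
by rewrite big_ord_recl /= addrAC subrr add0r.
Qed.

Lemma conic_hullP (S : V -> Prop) x :
  conic_hull S x <-> exists A, (forall u, u \in A -> S u) /\ in_cone A x.
Proof.
split.
  move=> [A [l [SA l0 Ex]]]; exists A; split; last by apply/in_coneP; exists l.
  move=> u uA; have iA : (index u A < size A)%N by rewrite index_mem.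
  by have := SA (Ordinal iA); rewrite /= nth_index.
move=> [A [SA /in_coneP [l [l0 Ex]]]]; exists A, l; split=> // i.
by apply: SA; apply: mem_nth.
Qed.

Lemma conic_hull_memP (A : seq V) x :
  conic_hull (fun y => y \in A) x <-> in_cone A x.
Proof.
rewrite conic_hullP; split=> [[A' [SA H]]|H]; last by exists A.
by apply: in_cone_sub H => u /SA; apply: in_cone_mem.
Qed.

Definition kproj (y a v : V) : V := v - (dot y v / dot y a) *: a.

Lemma dot_kproj (y a z v : V) : dot y a != 0 ->
  dot z (kproj y a v) = dot (z - (dot z a / dot y a) *: y) v.
Proof.
move=> ya; rewrite /kproj dotBl dotZl dotBr dotZr (dotC z a) (dotC y v).
by rewrite (dotC z v) (dotC y a); field; rewrite dotC.
Qed.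

Lemma in_cone_kproj (y a : V) (L : seq V) x :
  dot y a < 0 -> (forall u, u \in L -> 0 <= dot y u) ->
  in_cone (map (kproj y a) L) x -> exists2 d, d <= 0 & in_cone L (x + d *: a).
Proof.
move=> ya; elim: L x => [|a1 L IHL] x yL /=.
  by move=> ->; exists 0; rewrite ?scale0r ?addr0.
move=> [c c0 H].
have [d d0 Hd] := IHL _ (fun u Hu => yL u (@mem_behead _ (a1 :: L) u Hu)) H.
have ya1 : 0 <= dot y a1 by apply: yL; rewrite mem_head.
exists (d + c * (dot y a1 / dot y a)).
  rewrite -(addr0 0) lerD // mulr_ge0_le0 // mulr_ge0_le0 //.
  by rewrite ltW // invr_lt0.
exists c => //; congr in_cone: Hd.
by apply/rowP => j; rewrite /kproj !mxE; ring.
Qed.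

(* Induction on the number of generators:
   if the separating functional y for A is negative on a new generator a,
   project everything onto ker y along a and separate there. *)
Lemma farkas A b : ~ in_cone A b ->
  exists y : V, (forall u, u \in A -> 0 <= dot y u) /\ dot y b < 0.
Proof.
move: {2}(size A) (erefl (size A)) => k; elim: k A b => [|k IH] [|a A] b //=.
  move=> _ nin; exists (- b); split=> //; rewrite dotC dotNr oppr_lt0.
  by rewrite dot_self_gt0 //; apply/eqP => hb; apply: nin.
move=> [sA] nin.
have [y [yA yb]] : exists y : V, (forall u, u \in A -> 0 <= dot y u) /\ dot y b < 0.
  by apply: IH => // H; apply: nin; exists 0; rewrite // scale0r subr0.
have [ya|ya] := leP 0 (dot y a).
  by exists y; split=> // u; rewrite in_cons => /orP [/eqP ->|/yA].
have yan : dot y a != 0 by rewrite lt_eqF.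
have nin' : ~ in_cone (map (kproj y a) A) (kproj y a b).
  move=> /(in_cone_kproj ya yA) [d d0 Hd]; apply: nin.
  exists (dot y b / dot y a - d).
    by rewrite subr_ge0 (le_trans d0) // ltW // -mulrNN -invrN divr_gt0 ?oppr_gt0.
  by congr in_cone: Hd; apply/rowP => j; rewrite /kproj !mxE; ring.
have [z [zA zb]] := IH _ _ (etrans (size_map _ _) sA) nin'.
exists (z - (dot z a / dot y a) *: y); rewrite -dot_kproj //; split=> // u.
rewrite in_cons -dot_kproj // => /orP [/eqP ->|uA]; last exact/zA/map_f.
by rewrite /kproj divff // scale1r subrr dot0r.
Qed.

Lemma sum_pos_functional (Q : V -> Prop) (L : seq V) :
  Q 0 -> (forall a b, Q a -> Q b -> Q (a + b)) ->
  (forall y w, Q y -> w \in L -> 0 <= dot y w) ->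
  (forall w, w \in L -> exists y, Q y /\ 0 < dot y w) ->
  exists m, Q m /\ forall w, w \in L -> 0 < dot m w.
Proof.
move=> Q0 QD Qp Hw.
suff : forall L0 : seq V, {subset L0 <= L} ->
    exists m, Q m /\ forall w, w \in L0 -> 0 < dot m w.
  by apply=> u.
elim=> [|a L0 IH] sL; first by exists 0.
have [m [Qm Hm]] := IH (fun u h => sL u (@mem_behead _ (a :: L0) u h)).
have aL : a \in L by apply: sL; rewrite mem_head.
have [y [Qy Hy]] := Hw a aL.
exists (m + y); split=> [|w]; first exact: QD.
rewrite in_cons dotDl => /orP [/eqP ->|wL0]; first by rewrite ltr_wpDl // Qp.
have wL : w \in L by apply: sL; rewrite in_cons wL0 orbT.
by rewrite ltr_pwDl ?Hm // Qp.
Qed.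

Lemma pos_functional_kernel (m : V) L z :
  (forall u, u \in L -> 0 < dot m u) -> in_cone L z -> dot m z = 0 -> z = 0.
Proof.
elim: L z => [|a L IH] z HL //= [c c0 Hz] mz.
have HL' u : u \in L -> 0 < dot m u by move=> uL; apply: HL; rewrite in_cons uL orbT.
have ma : 0 < dot m a by apply: HL; rewrite mem_head.
have ge1 : 0 <= dot m (z - c *: a) by apply: (in_cone_dot_ge0 (A := L)) => // u /HL' /ltW.
have ge2 : 0 <= c * dot m a by rewrite mulr_ge0 // ltW.
have /eqP : dot m (z - c *: a) + c * dot m a = 0 by rewrite dotBr dotZr subrK.
rewrite paddr_eq0 // mulf_eq0 (gt_eqF ma) orbF => /andP [/eqP e1 /eqP c00].
by move: Hz e1; rewrite c00 scale0r subr0; apply: IH.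
Qed.

Definition irredundant (H : seq V) : Prop :=
  forall A h C, H = A ++ h :: C -> ~ in_cone (A ++ C) h.

Lemma irredundant_generators H :
  exists2 H', irredundant H' & forall x, in_cone H x <-> in_cone H' x.
Proof.
move: {2}(size H) (leqnn (size H)) => m; elim: m H => [|m IH] H sH.
  by move: sH; rewrite leqn0 => /nilP ->; exists [::] => // [[]].
case: (classic (exists A h C, H = A ++ h :: C /\ in_cone (A ++ C) h)); last first.
  by move=> nred; exists H => // A h C EH hin; apply: nred; exists A, h, C.
move=> [A [h [C [EH hin]]]].
have [|H' irrH' EH'] := IH (A ++ C); first by move: sH; rewrite EH !size_cat addnS.
exists H' => // x; rewrite -EH' EH in_cone_cat_cons; split=> [[c c0 Hx]|Hx].
  by rewrite -(subrK (c *: h) x); apply: in_coneD => //; apply: in_coneZ.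
by exists 0; rewrite // scale0r subr0.
Qed.

Lemma irredundant_nz H w : irredundant H -> w \in H -> w != 0.
Proof.
move=> irr wH; apply/eqP => w0; move: wH irr; rewrite w0 => /splitPr [A C] irr.
by apply: (irr A 0 C erefl); apply: in_cone0.
Qed.

(* For each other generator w, Farkas separates -w from cone(v, -v, others);
   the alternative would make w = 0 (sharpness) or v redundant. *)
Lemma extreme_functional H A v C :
  (forall x, in_cone H x -> in_cone H (- x) -> x = 0) -> irredundant H ->
  H = A ++ v :: C ->
  exists m : V, dot m v = 0 /\ forall w, w \in A ++ C -> 0 < dot m w.
Proof.
move=> shH irr EH.
have H'H x : in_cone (A ++ C) x -> in_cone H x.
  by move=> hx; rewrite EH in_cone_cat_cons; exists 0; rewrite // scale0r subr0.
pose Q y := dot y v = 0 /\ forall u, u \in A ++ C -> 0 <= dot y u.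
suff [m [[mv _] mpos]] : exists m, Q m /\ forall w, w \in A ++ C -> 0 < dot m w.
  by exists m.
apply: sum_pos_functional.
- by split=> [|u _]; rewrite dotC dot0r.
- move=> a b [av aH] [bv bH]; split=> [|u uH]; first by rewrite dotDl av bv addr0.
  by rewrite dotDl addr_ge0 ?aH ?bH.
- by move=> y w [_ yH] /yH.
move=> w wH'.
have wn : w != 0.
  apply: (irredundant_nz irr); rewrite EH mem_cat in_cons.
  by move: wH'; rewrite mem_cat => /orP [->|->]; rewrite ?orbT.
case: (classic (in_cone [:: v, - v & A ++ C] (- w))); last first.
  move/farkas => [y [yA yb]]; exists y; split; last by rewrite dotNr oppr_lt0 in yb.
  have y1 := yA v (mem_head _ _).
  have y2 : 0 <= dot y (- v) by apply: yA; rewrite in_cons mem_head orbT.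
  split; first by apply/eqP; rewrite eq_le y1 andbT -oppr_ge0 -dotNr.
  by move=> u uH; apply: yA; rewrite !in_cons uH !orbT.
move=> [al al0 [be be0 Hz]]; exfalso.
set z := - w - al *: v - be *: - v in Hz.
have [le|lt] := leP be al.
  have Hmw : in_cone H (- w).
    have -> : - w = z + (al - be) *: v by apply/rowP => j; rewrite /z !mxE; ring.
    apply: in_coneD; first exact: H'H.
    apply: in_coneZ; first by rewrite subr_ge0.
    by apply: in_cone_mem; rewrite EH mem_cat mem_head orbT.
  by move/eqP: wn; apply; apply: shH Hmw; apply: H'H; apply: in_cone_mem.
apply: (irr _ _ _ EH).
have -> : v = (be - al)^-1 *: (z + w).
  by apply/rowP => j; rewrite /z !mxE; field; rewrite subr_eq0 gt_eqF.
apply: in_coneZ; first by rewrite invr_ge0 subr_ge0 ltW.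
by apply: in_coneD => //; apply: in_cone_mem.
Qed.

Lemma extreme_face (m : V) A v C :
  dot m v = 0 -> (forall w, w \in A ++ C -> 0 < dot m w) ->
  forall x, in_cone (A ++ v :: C) x /\ dot m x = 0 <-> exists2 c, 0 <= c & x = c *: v.
Proof.
move=> mv mpos x; split=> [[]|[c c0 ->]].
  rewrite in_cone_cat_cons => [[c c0 hz]] mx; exists c => //; apply/eqP.
  rewrite -subr_eq0; apply/eqP; apply: (pos_functional_kernel mpos hz).
  by rewrite dotBr dotZr mv mulr0 subr0.
rewrite dotZr mv mulr0; split=> //; apply: in_coneZ => //.
by apply: in_cone_mem; rewrite mem_cat mem_head orbT.
Qed.

End Cones.

Definition rays (R : realFieldType) n k (B : 'M[R]_n) (r : 'I_k -> 'rV[int]_n)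
  : seq 'rV[R]_n := [seq latt B (r i) | i <- enum 'I_k].

Lemma gconeP (R : realFieldType) n (B : 'M[R]_n) s x :
  gcone B s x <-> in_cone (map (latt B) s) x.
Proof. exact: conic_hull_memP. Qed.

Lemma latt_eq0 (R : realFieldType) n (B : 'M[R]_n) z :
  B \in unitmx -> latt B z = 0 -> z = 0.
Proof.
move=> Bu h; have /rowP hz : map_mx (fun a : int => a%:~R) z = 0 :> 'rV[R]_n.
  by rewrite -(mulmxK Bu (map_mx _ z)); rewrite /latt in h; rewrite h mul0mx.
by apply/rowP => j; have := hz j; rewrite !mxE => e; apply: (@intr_inj R); rewrite e.
Qed.

Lemma cone_dim_ray (R : realFieldType) n (B : 'M[R]_n) t (v : 'rV[R]_n) :
  v != 0 -> (forall x, gcone B t x <-> exists2 c, 0 <= c & x = c *: v) ->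
  cone_dim B t = 1%N.
Proof.
move=> vn Ht; rewrite /cone_dim; set M := \matrix_(i < size t, j < n) _.
have rowM i : row i M = latt B t`_i by apply/rowP => j; rewrite !mxE.
apply/eqP; rewrite eqn_leq; apply/andP; split.
  apply: (leq_trans (mxrankS (_ : (M <= v)%MS))); last exact: rank_leq_row.
  apply/row_subP => i; apply/sub_rVP; rewrite rowM.
  have /Ht [c _ ->] : gcone B t (latt B t`_i).
    by apply/gconeP/in_cone_mem/map_f/mem_nth.
  by exists c.
rewrite lt0n mxrank_eq0; apply/negP => /eqP M0.
have /gconeP Hv : gcone B t v by apply/Ht; exists 1; rewrite ?ler01 ?scale1r.
move/eqP: vn; apply; apply: (@in_cone_sub _ _ _ [::]) Hv => _ /mapP [z zt ->].
have iz : (index z t < size t)%N by rewrite index_mem.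
by have := rowM (Ordinal iz); rewrite M0 /= nth_index // row0 => <-.
Qed.

Lemma cmap0 n k (r : 'I_k -> 'rV[int]_n) : cmap r 0 = 0.
Proof. by apply/rowP => j; rewrite !mxE /dot mul0mx mxE. Qed.

Lemma cond_ii_iii n k (r : 'I_k -> 'rV[int]_n) : cond_ii r -> cond_iii r.
Proof.
move=> h; split=> [x y xn yn [m Em]|i [m Em]].
  have /rowP x0 : x - - y = 0.
    by apply: h; [exists m | move=> i; rewrite !mxE opprK addr_ge0].
  exists 0; rewrite cmap0 subr0; apply/rowP => i; have /eqP := x0 i.
  by rewrite !mxE opprK paddr_eq0 ?xn ?yn // => /andP [/eqP].
have /rowP /(_ i) : delta i = 0.
  by apply: h => [|j]; [exists m; rewrite -Em subr0 | rewrite !mxE ler0n].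
by rewrite !mxE eqxx.
Qed.

Lemma cond_iii_ii n k (r : 'I_k -> 'rV[int]_n) : cond_iii r -> cond_ii r.
Proof.
move=> [h1 h2] x [m Em] xn; apply/rowP => j; rewrite mxE.
apply/eqP; rewrite eq_le xn andbT leNgt; apply/negP => xj.
apply: (h2 j); apply: (h1 (delta j) (x - delta j)) => [i|i|].
- by rewrite !mxE ler0n.
- rewrite !mxE subr_ge0; case: (eqVneq j i) => [<-|_]; last exact: xn.
  by rewrite -gtz0_ge1.
- by exists m; rewrite opprK addrC subrK.
Qed.

(* Every m in M is represented on V by the functional m o B^-1 (transposed). *)
Lemma latt_dual (R : realFieldType) n (B : 'M[R]_n) (m : 'rV[int]_n) :
  B \in unitmx -> exists w : 'rV[R]_n, forall z, dot w (latt B z) = (dot m z)%:~R.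
Proof.
move=> Bu; exists (map_mx (fun a : int => a%:~R) m *m (invmx B)^T) => z.
rewrite dot_intr /dot /latt trmx_mul -mulmxA (mulmxA _^T) -trmx_mul.
by rewrite mulmxV // trmx1 mul1mx.
Qed.

Lemma clear_den n (y : 'rV[rat]_n) : exists (m : 'rV[int]_n) (d : rat),
  0 < d /\ map_mx (fun a : int => a%:~R) m = d *: y.
Proof.
exists (\row_i (numq (y 0 i) * \prod_(j | j != i) denq (y 0 j))).
exists (\prod_j denq (y 0 j))%:~R; split.
  by rewrite ltr0z; apply: prodr_gt0 => j _; apply: denq_gt0.
by apply/rowP => i; rewrite !mxE [in RHS](bigD1 i) //= !intrM numqE; ring.
Qed.

(* Under (ii) the cone of the rays, computed over Q, contains the opposite of
   each ray: otherwise Farkas gives a rational, hence an integral, functional m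
   with c(m) >= 0 and c(m) <> 0. *)
Lemma neg_ray_in_rat_cone n k (r : 'I_k -> 'rV[int]_n) j :
  cond_ii r ->
  in_cone [seq map_mx (fun a : int => a%:~R) (r i) : 'rV[rat]_n | i <- enum 'I_k]
          (- map_mx (fun a : int => a%:~R) (r j)).
Proof.
move=> hii; apply: NNPP => /farkas [y [yA yb]].
have [m [d [d0 Em]]] := clear_den y.
have Edm z : (dot m z)%:~R = d * dot y (map_mx (fun a : int => a%:~R) z).
  by rewrite dot_intr Em dotZl.
have /rowP /(_ j) : cmap r m = 0.
  apply: hii => [|i]; first by exists m.
  rewrite mxE -(ler0z rat) Edm mulr_ge0 ?(ltW d0) //.
  by apply/yA/map_f; rewrite mem_enum.
rewrite !mxE => /(congr1 (fun a : int => a%:~R : rat)) /eqP.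
rewrite Edm mulf_eq0 (gt_eqF d0) /=.
by rewrite dotNr oppr_lt0 in yb; rewrite gt_eqF.
Qed.

Lemma in_cone_ratr (R : realFieldType) n (A : seq 'rV[rat]_n) x :
  in_cone A x -> in_cone (map (map_mx (ratr : rat -> R)) A) (map_mx ratr x).
Proof.
elim: A x => [|a A IH] x /=; first by move=> ->; rewrite map_mx0.
move=> [c c0 /IH hx]; exists (ratr c); first by rewrite ler0q.
by rewrite map_mxB map_mxZ in hx.
Qed.

Lemma in_cone_mulmx (F : realFieldType) n p (M : 'M[F]_(n, p)) A x :
  in_cone A x -> in_cone (map (mulmx^~ M) A) (x *m M).
Proof.
elim: A x => [|a A IH] x /=; first by move=> ->; rewrite mul0mx.
move=> [c c0 /IH hx]; exists c => //.
by rewrite mulmxBl -scalemxAl in hx.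
Qed.

Lemma neg_ray_in_cone (R : realFieldType) n (B : 'M[R]_n) k
    (r : 'I_k -> 'rV[int]_n) j :
  cond_ii r -> in_cone (rays B r) (- latt B (r j)).
Proof.
move=> /(neg_ray_in_rat_cone j) /(in_cone_ratr R) /(in_cone_mulmx B).
have ratrE (z : 'rV[int]_n) :
    map_mx ratr (map_mx (fun a : int => a%:~R) z : 'rV[rat]_n) *m B = latt B z.
  by congr (_ *m B); apply/rowP => i; rewrite !mxE ratr_int.
rewrite map_mxN mulNmx ratrE /rays -!map_comp; congr in_cone.
by apply: eq_map => i /=; rewrite ratrE.
Qed.

Section Fan.
Variables (R : realFieldType) (n : nat) (B : 'M[R]_n).
Variables (Sigma : seq (seq 'rV[int]_n)) (k : nat) (r : 'I_k -> 'rV[int]_n).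
Hypothesis Bu : B \in unitmx.
Hypothesis fan : is_fan B Sigma.
Hypothesis rays_cover : forall s, s \in Sigma -> cone_dim B s = 1%N ->
  exists i, primitive_gen B (gcone B s) (r i).
Hypothesis rays_in_fan : forall i, exists2 s, s \in Sigma & gcone B s (latt B (r i)).

Lemma ray_in_rays t (v : 'rV[R]_n) :
  t \in Sigma -> v != 0 ->
  (forall x, gcone B t x <-> exists2 c, 0 <= c & x = c *: v) ->
  in_cone (rays B r) v.
Proof.
move=> tS vn Ht.
have [i [/Ht [c c0 Ec] rn _]] := rays_cover tS (cone_dim_ray vn Ht).
have cn : c != 0.
  by apply: contra rn => /eqP c0'; apply/eqP/(latt_eq0 Bu); rewrite Ec c0' scale0r.
have -> : v = c^-1 *: latt B (r i) by rewrite Ec scalerA mulVf // scale1r.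
by apply: in_coneZ; rewrite ?invr_ge0 //; apply/in_cone_mem/map_f; rewrite mem_enum.
Qed.

(* Every cone of the fan is generated by its rays: each irredundant generator
   v spans an extreme half-line, which is a face, hence a cone of the fan. *)
Lemma fan_cone_in_rays s x : s \in Sigma -> gcone B s x -> in_cone (rays B r) x.
Proof.
move=> sS; have [fsharp fface _] := fan.
have [H irrH EH] := irredundant_generators (map (latt B) s).
have HC y : gcone B s y <-> in_cone H y by rewrite gconeP.
move=> /HC; apply: in_cone_sub => v.
move=> vH; case/splitPr: vH irrH EH HC => A C irrH EH HC.
have shH y : in_cone (A ++ v :: C) y -> in_cone (A ++ v :: C) (- y) -> y = 0.
  by move=> /HC h1 /HC h2; apply: fsharp sS _ h1 h2.
have [m [mv mpos]] := extreme_functional shH irrH erefl.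
have mC y : gcone B s y -> 0 <= dot m y.
  move=> /HC; apply: in_cone_dot_ge0 => u; rewrite mem_cat in_cons.
  by move=> /or3P [uA|/eqP ->|uC]; rewrite ?mv // ltW // mpos // mem_cat ?uA ?uC ?orbT.
have [t tS Ht] := fface s sS (fun y => gcone B s y /\ dot m y = 0)
  (ex_intro _ m (conj mC (fun y => iff_refl _))).
have vH : v \in A ++ v :: C by rewrite mem_cat mem_head orbT.
apply: (ray_in_rays tS (irredundant_nz irrH vH)) => y.
by rewrite -Ht HC; apply: extreme_face.
Qed.


(* (i) -> (ii): if c(m) >= 0, the functional representing m is nonnegative on
   every cone of the fan; (i) puts -rho in the conic hull, so c(m) <= 0. *)
Lemma skel_complete_cond_ii : rel_skel_complete B Sigma -> cond_ii r.
Proof.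
move=> hi x [m ->] xn; have [w Ew] := latt_dual m Bu.
have wU u : (exists2 s, s \in Sigma & gcone B s u) -> 0 <= dot w u.
  move=> [s sS /(fan_cone_in_rays sS)]; apply: in_cone_dot_ge0.
  by move=> _ /mapP [i _ ->]; rewrite Ew ler0z; have := xn i; rewrite mxE.
apply/rowP => j; rewrite !mxE; apply/eqP; rewrite eq_le.
have := xn j; rewrite mxE => ->; rewrite andbT.
have /hi /conic_hullP [A [SA HA]] :
    lin_span (fun x => exists2 s, s \in Sigma & gcone B s x) (- latt B (r j)).
  exists [:: latt B (r j)], (fun _ => -1); split; last by rewrite big_ord1 scaleN1r.
  by move=> i; rewrite (ord1 i); apply: rays_in_fan.
have := in_cone_dot_ge0 (fun u uA => wU u (SA u uA)) HA.
by rewrite dotNr Ew oppr_ge0 lerz0.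
Qed.

(* (ii) -> (i): the cone of the rays is symmetric, hence a linear subspace, and
   it contains every cone of the fan. *)
Lemma cond_ii_skel_complete : cond_ii r -> rel_skel_complete B Sigma.
Proof.
move=> hii.
have Rneg u : in_cone (rays B r) u -> in_cone (rays B r) (- u).
  move=> /in_cone_opp; apply: in_cone_sub => _ /mapP [_ /mapP [i _ ->] ->].
  exact: neg_ray_in_cone.
move=> x; split=> [[s [l [Ss l0 ->]]]|[s [l [Ss ->]]]]; first by exists s, l.
apply/conic_hullP; exists (rays B r); split=> [_ /mapP [i _ ->]|].
  exact: rays_in_fan.
apply: in_cone_sum => i; have [s0 s0S /(fan_cone_in_rays s0S) hs] := Ss i.
have [li|li] := leP 0 (l i); first exact: in_coneZ.
rewrite -[_ *: _]opprK -scaleNr -scalerN; apply: in_coneZ; [by rewrite oppr_ge0 ltW | exact: Rneg].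
Qed.

End Fan.

Theorem proposition1p390 (R : realFieldType) (n : nat) (B : 'M[R]_n)
  (Sigma : seq (seq 'rV[int]_n)) (k : nat) (r : 'I_k -> 'rV[int]_n) :
  B \in unitmx ->
  is_fan B Sigma ->
  injective r ->
  (forall i, exists2 s, s \in Sigma &
     cone_dim B s = 1%N /\ primitive_gen B (gcone B s) (r i)) ->
  (forall s, s \in Sigma -> cone_dim B s = 1%N ->
     exists i, primitive_gen B (gcone B s) (r i)) ->
  [<-> rel_skel_complete B Sigma; cond_ii r; cond_iii r].
Proof.
move=> Bu fan _ rays_are_rays rays_cover.
have rays_in_fan i : exists2 s, s \in Sigma & gcone B s (latt B (r i)).
  by have [s sS [_ [h _ _]]] := rays_are_rays i; exists s.
tfae.
- exact: skel_complete_cond_ii.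
- exact: cond_ii_iii.
- by move=> /cond_iii_ii; apply: cond_ii_skel_complete.
Qed.
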